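(* Let $G=(V,E)$ be a transitive and finite directed graph with in-degree at least $2$ at every vertex, and let $\widehat{G}=(\widehat{V},\widehat{E})$ be the graph obtained by repeatedly applying a $v$-lag at every vertex $v$ of in-degree at least $3$. Then $\widehat{G}$ is in-degree $2$-regular, and there is an embedding $V\subseteq\widehat{V}$ which extends to a bijection $\theta$ from the set $E^\bullet$ of finite paths of $G$ onto the set of finite paths in $\widehat{G}$ whose range and source lie in $V$.
   Context: A directed graph $G=(V,E,r,s)$; in-degree of $v$ is $|r^{-1}(v)|$; in-degree $2$-regular means every vertex has in-degree exactly $2$. Paths $e_1\cdots e_n$ satisfy $s(e_i)=r(e_{i+1})$, vertices are paths of length $0$; ''edge from $u$ to $w$'' has source $u$, range $w$; transitive means there is a path between any two vertices. The $v$-lag at a vertex $v$ of in-degree $d_v\ge3$: enumerate the edges with range $v$ as $e_0,\dots,e_{d_v-1}$ with sources $u_0,\dots,u_{d_v-1}$; keep all other vertices and edges; add vertices $v_1,\dots,v_{d_v-2}$, an edge $f_1$ from $v_1$ to $v$, edges $f_i$ from $v_i$ to $v_{i-1}$ ($2\le i\le d_v-2$); replace $e_0$ by $\hat e_0$ from $u_0$ to $v$, $e_j$ by $\hat e_j$ from $u_j$ to $v_j$ ($1\le j\le d_v-2$), $e_{d_v-1}$ by $\hat e_{d_v-1}$ from $u_{d_v-1}$ to $v_{d_v-2}$. Only edges into $v$ change, so lags at different vertices commute. The map $\theta$ at one lag sends vertices to themselves, edges not into $v$ to themselves, $e_j$ to the path $f_1\cdots f_j\hat e_j$ (with $f_1\cdots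 f_{d_v-2}\hat e_{d_v-1}$ for $j=d_v-1$ and $\hat e_0$ for $j=0$), extended to paths by concatenation; the $\theta$ for $\widehat{G}$ is the composite of these maps. *)

From mathcomp Require Import all_boot.
Set Implicit Arguments. Unset Strict Implicit. Unset Printing Implicit Defensive.

(* A path e_1 ... e_n (s e_i = r e_{i+1}) is encoded as a pair (v, [:: e_1; ...; e_n])
   where v is its range vertex (so r e_1 = v); a vertex v is the length-0 path (v, [::]). *)
Section Paths.
Variables (V E : eqType) (r s : E -> V).

Definition is_gpath (p : V * seq E) : bool :=
  match p.2 with
  | [::] => true
  | e :: es => (r e == p.1) && path (fun e1 e2 => s e1 == r e2) e es
  end.

Definition prange (p : V * seq E) : V := p.1.
Definition psource (p : V * seq E) : V := last p.1 (map s p.2).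
End Paths.

Section Graph.
Variables (V E : finType) (r : E -> V).
Definition indeg (v : V) : nat := #|[pred e | r e == v]|.
End Graph.

Definition transitive_graph (V E : finType) (r s : E -> V) : Prop :=
  forall u w : V, exists p, is_gpath r s p /\ prange p = u /\ psource s p = w.

(* The lagged graph \hat G (all lags applied simultaneously; they commute).
   [idx e] is the position of e in the chosen enumeration e_0,...,e_{d-1} of the
   edges with range r e.
   Vertices: (v, 0) is v itself, (v, k) for 1 <= k <= d_v - 2 is v_k.
   Edges: inl e is \hat e; inr (v, i) is f_{i+1} (from v_{i+1} to v_i, v_0 = v). *)
Section Lag.
Variables (V E : finType) (r s : E -> V) (idx : E -> nat).

Definition lagV : finType := {v : V & 'I_(indeg r v - 2).+1}.
Definition lagE : finType := (E + {v : V & 'I_(indeg r v - 2)})%type.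

Definition lag_emb (v : V) : lagV := existT _ v ord0.

Definition lag_r (x : lagE) : lagV :=
  match x with
  | inl e => existT (fun v => 'I_(indeg r v - 2).+1) (r e)
                    (inord (minn (idx e) (indeg r (r e) - 2)))
  | inr (existT v i) => existT (fun v => 'I_(indeg r v - 2).+1) v (widen_ord (leqnSn _) i)
  end.

Definition lag_s (x : lagE) : lagV :=
  match x with
  | inl e => lag_emb (s e)
  | inr (existT v i) => existT (fun v => 'I_(indeg r v - 2).+1) v (lift ord0 i)
  end.

(* theta(e_j) = f_1 ... f_k \hat e_j with k = min(j, d_v - 2). *)
Definition theta_edge (e : E) : seq lagE :=
  [seq inr (existT (fun v => 'I_(indeg r v - 2)) (r e) i)
    | i <- [seq j <- enum 'I_(indeg r (r e) - 2)
             | (nat_of_ord j < minn (idx e) (indeg r (r e) - 2))%N]]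
  ++ [:: inl e].

Definition theta (p : V * seq E) : lagV * seq lagE :=
  (lag_emb p.1, flatten (map theta_edge p.2)).
End Lag.

Arguments lag_r [V E] r idx x.
Arguments lag_s [V E] r s x.

From mathcomp Require Import all_boot zify_ssreflect.
Set Implicit Arguments. Unset Strict Implicit. Unset Printing Implicit Defensive.

(* In \hat G, for k < d_v - 2 the vertex v_k receives exactly \hat e_k and f_(k+1),
   while v_(d_v - 2) receives \hat e_(d_v - 2) and \hat e_(d_v - 1).  For k >= 1 the
   only edge with source v_k is f_k; hence in a path of \hat G with range in V every
   edge \hat e into v_k is immediately preceded by f_1 ... f_k, and a path with source
   in V cannot stop inside such a chain.  So such a path cuts uniquely into blocks
   theta(e), and theta is inverted by forgetting the f's. *)

Section PathCalculus.
Variables (V E : eqType) (r s : E -> V).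

Lemma gpath_cons x e l :
  is_gpath r s (x, e :: l) = (r e == x) && is_gpath r s (s e, l).
Proof. by case: l => [|e' l]; rewrite /is_gpath /= ?andbT // (eq_sym (s e)). Qed.

Lemma psource_cons x e l : psource s (x, e :: l) = psource s (s e, l).
Proof. by []. Qed.

Lemma psource_cat x l1 l2 :
  psource s (x, l1 ++ l2) = psource s (psource s (x, l1), l2).
Proof. by elim: l1 x => [|e l1 IH] x //=; rewrite !psource_cons IH. Qed.

Lemma gpath_cat x l1 l2 :
  is_gpath r s (x, l1) -> is_gpath r s (psource s (x, l1), l2) ->
  is_gpath r s (x, l1 ++ l2).
Proof.
elim: l1 x => [|e l1 IH] x //=.
by rewrite !gpath_cons psource_cons => /andP[-> /IH].
Qed.

End PathCalculus.

Section PathMorphism.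
Variables (V1 E1 V2 E2 : eqType) (r1 s1 : E1 -> V1) (r2 s2 : E2 -> V2).
Variables (f : V1 -> V2) (g : E1 -> E2).
Hypothesis f_inj : injective f.
Hypothesis f_r : forall e, f (r1 e) = r2 (g e).
Hypothesis f_s : forall e, f (s1 e) = s2 (g e).

Lemma gpath_morph x l : is_gpath r2 s2 (f x, map g l) = is_gpath r1 s1 (x, l).
Proof.
case: l => [|e l] //; rewrite /is_gpath /= path_map -f_r (inj_eq f_inj).
by congr andb; apply: eq_path => e1 e2 /=; rewrite -f_r -f_s (inj_eq f_inj).
Qed.

Lemma psource_morph x l : psource s2 (f x, map g l) = f (psource s1 (x, l)).
Proof.
by rewrite /psource /= -map_comp (eq_map (fun e => esym (f_s e))) map_comp last_map.
Qed.

End PathMorphism.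

Section FlatLag.
Variables (V E : finType) (r s : E -> V) (idx : E -> nat).

Definition lag_level (e : E) : nat := minn (idx e) (indeg r (r e) - 2).

(* The lagged graph with its dependent types erased: v_k is (v, k), with v_0 = v,
   and f_(k+1) is inr (v, k). *)
Definition flat_r (y : E + V * nat) : V * nat :=
  match y with inl e => (r e, lag_level e) | inr x => x end.

Definition flat_s (y : E + V * nat) : V * nat :=
  match y with inl e => (s e, 0) | inr (v, k) => (v, k.+1) end.

Definition flatV (x : lagV r) : V * nat := (projT1 x, val (projT2 x)).

Definition flatE (y : lagE r) : E + V * nat :=
  match y with inl e => inl e | inr (existT v i) => inr (v, val i) end.

Lemma flatV_inj : injective flatV.
Proof. by case=> v i [w j] [ev ei]; subst w; rewrite (val_inj ei). Qed.

Lemma flatE_inj : injective flatE.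
Proof.
by case=> [e|[v i]] [e'|[w j]] //= [] => [->|ev ei] //; subst w; rewrite (val_inj ei).
Qed.

Lemma flatV_r y : flatV (lag_r r idx y) = flat_r (flatE y).
Proof. by case: y => [e|[v i]] //; rewrite /flatV /= inordK // ltnS geq_minr. Qed.

Lemma flatV_s y : flatV (lag_s r s y) = flat_s (flatE y).
Proof. by case: y => [e|[v i]]. Qed.

Lemma lag_r_flat y v (k : 'I_(indeg r v - 2).+1) :
  (lag_r r idx y == existT _ v k) = (flat_r (flatE y) == (v, k : nat)).
Proof. by rewrite -(inj_eq flatV_inj) flatV_r. Qed.

Lemma lag_emb_inj : injective (@lag_emb V E r).
Proof. by move=> u w /(congr1 flatV) []. Qed.

Definition lag_chain (e : E) (j : nat) : seq (E + V * nat) :=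
  [seq inr (r e, i) | i <- iota j (lag_level e - j)] ++ [:: inl e].

Lemma lag_chain_level e : lag_chain e (lag_level e) = [:: inl e].
Proof. by rewrite /lag_chain subnn. Qed.

Lemma lag_chain_step e j :
  j < lag_level e -> lag_chain e j = inr (r e, j) :: lag_chain e j.+1.
Proof. by move=> lt_j; rewrite /lag_chain -subnSK. Qed.

Fixpoint flat_theta_from (j : nat) (d : seq E) : seq (E + V * nat) :=
  if d is e :: d' then lag_chain e j ++ flat_theta_from 0 d' else [::].

Lemma flatE_theta_edge e : map flatE (theta_edge r idx e) = lag_chain e 0.
Proof.
rewrite /theta_edge /lag_chain map_cat subn0 -map_comp; congr (_ ++ _).
rewrite -(filter_iota_ltn 0 (geq_minr _ _)) -val_enum_ord filter_map -map_comp.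
exact: eq_map.
Qed.

Lemma flatE_theta d :
  map flatE (flatten (map (theta_edge r idx) d)) = flat_theta_from 0 d.
Proof. by elim: d => [|e d IH] //=; rewrite map_cat flatE_theta_edge IH. Qed.

Definition lag_edges (l : seq (E + V * nat)) : seq E :=
  pmap (fun y => if y is inl e then Some e else None) l.

Lemma lag_edges_theta j d : lag_edges (flat_theta_from j d) = d.
Proof.
elim: d j => [|e d IH] j //=.
rewrite /lag_edges pmap_cat -/(lag_edges (flat_theta_from 0 d)) IH pmap_cat /=.
by elim: iota.
Qed.

Lemma lag_chain_gpath e j :
  j <= lag_level e ->
  is_gpath flat_r flat_s ((r e, j), lag_chain e j) /\
  psource flat_s ((r e, j), lag_chain e j) = (s e, 0).
Proof.
move=> /subnKC; move: (lag_level e - j) => n; elim: n j => [|n IH] j.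
  by rewrite addn0 => ->; rewrite lag_chain_level gpath_cons eqxx.
move=> def_level; rewrite lag_chain_step; last by lia.
by rewrite gpath_cons psource_cons eqxx; apply: IH; lia.
Qed.

Lemma flat_theta_gpath u d :
  is_gpath r s (u, d) ->
  is_gpath flat_r flat_s ((u, 0), flat_theta_from 0 d) /\
  psource flat_s ((u, 0), flat_theta_from 0 d) = (psource s (u, d), 0).
Proof.
elim: d u => [|e d IH] u //=.
rewrite gpath_cons psource_cons => /andP[/eqP <- /IH[gd sd]].
have [ge se] := lag_chain_gpath (leq0n (lag_level e)).
by rewrite psource_cat se; split=> //; apply: gpath_cat; rewrite ?se.
Qed.

(* The bound [j <= head 0 _] also forces [j = 0] when the path uses no edge of G. *)
Lemma flat_gpath_theta v j l :
  is_gpath flat_r flat_s ((v, j), l) -> (psource flat_s ((v, j), l)).2 = 0 ->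
  [/\ is_gpath r s (v, lag_edges l), j <= head 0 (map lag_level (lag_edges l))
    & l = flat_theta_from j (lag_edges l)].
Proof.
elim: l v j => [|[e|[w i]] l IH] v j; first by move=> _ /= ->.
  rewrite gpath_cons psource_cons => /andP[/eqP[<- <-] gl] /(IH _ _ gl)[gd _ def_l].
  by rewrite /= gpath_cons eqxx gd lag_chain_level -def_l.
rewrite gpath_cons psource_cons => /andP[/eqP[-> ->] gl] /(IH _ _ gl)[].
rewrite /lag_edges /= -/(lag_edges l).
case: (lag_edges l) => [|e d] //= gd lt_j ->; split=> //; first exact: ltnW.
by move: gd; rewrite gpath_cons => /andP[/eqP <- _]; rewrite (lag_chain_step lt_j).
Qed.

Lemma theta_gpath p :
  is_gpath r s p ->
  is_gpath (lag_r r idx) (lag_s r s) (theta r idx p) /\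
  psource (lag_s r s) (theta r idx p) = lag_emb r (psource s p).
Proof.
case: p => u d /flat_theta_gpath[gd sd].
rewrite -(gpath_morph flatV_inj flatV_r flatV_s) flatE_theta; split=> //.
by apply: flatV_inj; rewrite -(psource_morph flatV_s) flatE_theta.
Qed.

Lemma theta_inj : injective (theta r idx).
Proof.
case=> u d [u' d'] /(congr1 (fun q => (flatV q.1, lag_edges (map flatE q.2)))).
by rewrite /= !flatE_theta !lag_edges_theta => -[-> ->].
Qed.

Lemma theta_onto q u w :
  is_gpath (lag_r r idx) (lag_s r s) q -> prange q = lag_emb r u ->
  psource (lag_s r s) q = lag_emb r w ->
  exists2 p, is_gpath r s p & theta r idx p = q.
Proof.
case: q => x l gq /= def_x; subst x.
move: gq; rewrite -(gpath_morph flatV_inj flatV_r flatV_s) => gq.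
move/(congr1 flatV); rewrite -(psource_morph flatV_s) => /(congr1 snd) sq.
have [gd _ def_l] := flat_gpath_theta gq sq.
exists (u, lag_edges (map flatE l)) => //; congr pair.
by apply: (inj_map flatE_inj); rewrite flatE_theta -def_l.
Qed.

End FlatLag.

Section LagIndegree.
Variables (V E : finType) (r : E -> V) (idx : E -> nat).
Hypothesis idx_lt : forall e, idx e < indeg r (r e).
Hypothesis idx_inj : forall e1 e2, r e1 = r e2 -> idx e1 = idx e2 -> e1 = e2.

Lemma idx_onto v k : k < indeg r v -> exists2 e, r e = v & idx e = k.
Proof.
move=> lt_k; set ins := [pred e | r e == v].
have uniq_idx : uniq (map idx (enum ins)).
  rewrite map_inj_in_uniq ?enum_uniq // => e1 e2.
  by rewrite !mem_enum !inE => /eqP re1 /eqP re2; apply: idx_inj; rewrite re1 re2.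
have sub_idx : {subset map idx (enum ins) <= iota 0 (indeg r v)}.
  by move=> n /mapP[e]; rewrite mem_enum inE mem_iota => /eqP <- ->; apply: idx_lt.
have size_idx : size (iota 0 (indeg r v)) <= size (map idx (enum ins)).
  by rewrite size_iota size_map -cardE.
have : k \in map idx (enum ins).
  by rewrite (uniq_min_size uniq_idx sub_idx size_idx).2 mem_iota.
by case/mapP=> e; rewrite mem_enum inE => /eqP re ->; exists e.
Qed.

Lemma eq_edge_idx e e' : (e == e') = (r e == r e') && (idx e == idx e').
Proof.
apply/eqP/andP => [-> //| [/eqP re /eqP ie]]; exact: idx_inj.
Qed.

Lemma lag_indeg_top v (k : 'I_(indeg r v - 2).+1) :
  2 <= indeg r v -> k = indeg r v - 2 :> nat ->
  #|[pred y : lagE r | lag_r r idx y == existT _ v k]| = 2.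
Proof.
move=> ge2_v def_k.
have [e1 re1 ie1] := @idx_onto v (indeg r v - 2) ltac:(lia).
have [e2 re2 ie2] := @idx_onto v (indeg r v - 1) ltac:(lia).
have ne12 : inl e1 != inl e2 :> lagE r.
  by apply/eqP => -[e12]; move: ie2; rewrite -e12 ie1; lia.
transitivity #|pred2 (inl e1 : lagE r) (inl e2)|; last by rewrite card2 ne12.
apply: eq_card => y.
rewrite inE lag_r_flat !inE -!(inj_eq (@flatE_inj _ _ r)) -!sum_eqE def_k.
case: y => [e|[w i]] /=; last first.
  by rewrite xpair_eqE; case: eqP => //= ew; subst w; have := ltn_ord i; lia.
rewrite !eq_edge_idx re1 re2 ie1 ie2 xpair_eqE /lag_level.
by case: eqP => //= re; have := idx_lt e; rewrite re; lia.
Qed.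

Lemma lag_indeg_below v (k : 'I_(indeg r v - 2).+1) :
  k < indeg r v - 2 ->
  #|[pred y : lagE r | lag_r r idx y == existT _ v k]| = 2.
Proof.
move=> lt_k.
have [e0 re0 ie0] := @idx_onto v k ltac:(lia).
pose f : lagE r := inr (existT (fun u => 'I_(indeg r u - 2)) v (Ordinal lt_k)).
have ne : inl e0 != f by [].
transitivity #|pred2 (inl e0) f|; last by rewrite card2 ne.
apply: eq_card => y.
rewrite inE lag_r_flat !inE -!(inj_eq (@flatE_inj _ _ r)) -!sum_eqE.
case: y => [e|[w i]] //=; rewrite ?orbF //.
rewrite eq_edge_idx re0 ie0 xpair_eqE /lag_level.
by case: eqP => //= re; rewrite re; lia.
Qed.

Lemma lag_indeg2 :
  (forall v, 2 <= indeg r v) ->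
  forall x : lagV r, #|[pred y : lagE r | lag_r r idx y == x]| = 2.
Proof.
move=> ge2 [v k]; have := ltn_ord k; rewrite ltnS leq_eqVlt.
by case/orP => [/eqP|]; [apply: lag_indeg_top | apply: lag_indeg_below].
Qed.

End LagIndegree.

Theorem corollary3p8 (V E : finType) (r s : E -> V) (idx : E -> nat) :
  transitive_graph r s ->
  (forall v : V, 2 <= indeg r v) ->
  (* idx enumerates, for each v, the edges with range v as 0, ..., d_v - 1 *)
  (forall e, idx e < indeg r (r e)) ->
  (forall e1 e2, r e1 = r e2 -> idx e1 = idx e2 -> e1 = e2) ->
  (* \hat G is in-degree 2-regular *)
  (forall x : lagV r, #|[pred y : lagE r | lag_r r idx y == x]| = 2) /\
  (* the embedding V -> \hat V *)
  injective (@lag_emb V E r) /\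
  (* theta maps paths of G to paths of \hat G with range and source in V *)
  (forall p, is_gpath r s p ->
     is_gpath (lag_r r idx) (lag_s r s) (theta r idx p) /\
     prange (theta r idx p) = lag_emb r (prange p) /\
     psource (lag_s r s) (theta r idx p) = lag_emb r (psource s p)) /\
  (* theta is injective on paths of G *)
  (forall p1 p2, is_gpath r s p1 -> is_gpath r s p2 ->
     theta r idx p1 = theta r idx p2 -> p1 = p2) /\
  (* theta is onto the paths of \hat G with range and source in V *)
  (forall q, is_gpath (lag_r r idx) (lag_s r s) q ->
     (exists u, prange q = lag_emb r u) ->
     (exists w, psource (lag_s r s) q = lag_emb r w) ->
     exists2 p, is_gpath r s p & theta r idx p = q).
Proof.
move=> _ ge2 idx_lt idx_inj.
split; first exact: lag_indeg2.
split; first exact: lag_emb_inj.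
split; first by move=> p /(theta_gpath idx)[gq sq].
split; first by move=> p1 p2 _ _ /theta_inj.
by move=> q gq [u ru] [w sw]; apply: theta_onto gq ru sw.
Qed.
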